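(* Under the assumptions of Theorem 2, for every integer $j\ge J_2^\star$, $$\mathbb P(\tau_{\text{com}}>j)\le 3(n+m)^3\exp\big(-j/(3\bar d)\big).$$
   Context: Setting: undirected graph on honest agents $[n]$ and malicious agents $n+1,\dots,n+m$; $N(i)$ neighbors of $i$, $\bar d=\max_{i\in[n]}|N(i)|$; $E_{\text{hon}}$ the edges among honest agents. In the algorithm, at the end of each phase $j$, honest $i$ samples $H_j^{(i)}$ uniformly from $N(i)\setminus P_j^{(i)}$ (independently of everything else given the past), where $P_j^{(i)}$ is its blocklist at phase $j$; the proposed blocking rule, whenever it triggers at phase $j$, adds the agent $H_{j-1}^{(i)}$ to $P_{j'}^{(i)}$ exactly for $j'\in\{j,\dots,\lceil j^\eta\rceil\}$ (blocklists otherwise empty); the rule involves $\theta_j=(j/3)^{\rho_1}$. Assumptions of Theorem 2 include $\eta>1$, $0<\rho_1\le1/\eta$ (and the other conditions $\beta>1$, $\alpha>\frac32+\frac1{2\beta}+\frac1{2\rho_1^2}$, $\frac1{2\alpha-3}<\rho_2<\rho_1(\beta-1)$, $G_{\text{hon}}$ connected). Definitions. $J_2^\star=\min\{j\in\mathbb N: 1\le\lfloor\theta_{j'}\rfloor\le j'-2\text{ and } j'/3\le(j'-2)-\lceil\lfloor\theta_{j'}\rfloor^\eta\rceil\ \forall j'\ge j\}$. For $\{i,i'\}\in E_{\text{hon}}$, $\Xi_j^{(i\to i')}=\bigcap_{j'=\lfloor\theta_j\rfloor}^{j-2}\{H_{j'}^{(i')}\ne i\}$. $\tau_{\text{com}}=\inf\{j\in\mathbb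 N:$ for all $j'\ge j$ and all ordered pairs $(i,i')$ with $\{i,i'\}\in E_{\text{hon}}$, $\Xi_{j'}^{(i\to i')}$ does not occur$\}$. *)

From HB Require Import structures.
From mathcomp Require Import all_boot all_order all_algebra.
From mathcomp Require Import all_classical all_reals all_analysis.
Unset Implicit Arguments. Unset Printing Implicit Defensive.
Import Order.TTheory GRing.Theory Num.Theory.
Local Open Scope classical_set_scope.
Local Open Scope ring_scope.

(* Agents are 'I_(n+m); agent i (0-based) is honest iff i < n,
   malicious iff n <= i < n+m. *)
Definition honest (n m : nat) (i : 'I_(n + m)) : bool := (i < n)%N.

Definition nbhd (N : nat) (adj : rel 'I_N) (i : 'I_N) : {set 'I_N} :=
  [set k | adj i k].

Definition dbar (n m : nat) (adj : rel 'I_(n + m)) : nat :=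
  \max_(i : 'I_(n + m) | honest n m i) #|nbhd (n + m) adj i|.

Definition hon_edge (n m : nat) (adj : rel 'I_(n + m)) : rel 'I_(n + m) :=
  fun x y => [&& honest n m x, honest n m y & adj x y].

Definition G_hon_connected (n m : nat) (adj : rel 'I_(n + m)) : Prop :=
  forall x y, honest n m x -> honest n m y -> connect (hon_edge n m adj) x y.

Definition simple_graph (N : nat) (adj : rel 'I_N) : Prop :=
  symmetric adj /\ irreflexive adj.

Definition theta {R : realType} (rho1 : R) (j : nat) : R :=
  (j%:R / 3) `^ rho1.

Definition J2cond {R : realType} (eta rho1 : R) (j' : nat) : Prop :=
  let f := Num.floor (theta rho1 j') in
  (1 <= f)%R /\ (f <= j'%:Z - 2)%R /\
  (j'%:R / 3 <= (j'%:R - 2) - (Num.ceil ((f%:~R : R) `^ eta))%:~R :> R).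

Definition is_J2star {R : realType} (eta rho1 : R) (J : nat) : Prop :=
  (forall j', (J <= j')%N -> J2cond eta rho1 j') /\
  (forall J', (forall j', (J' <= j')%N -> J2cond eta rho1 j') -> (J <= J')%N).

(* Blocklist P_j^{(i)}(w): the set of H_{l-1}^{(i)}(w) over all phases l >= 2
   at which the blocking rule of agent i triggers (event T l i) and
   such that l <= j <= ceil(l^eta). *)
Definition blocklist {R : realType} {Omega : Type} (N : nat) (eta : R)
  (H : nat -> 'I_N -> Omega -> 'I_N) (T : nat -> 'I_N -> set Omega)
  (j : nat) (i : 'I_N) (w : Omega) : {set 'I_N} :=
  [set x | `[< exists l : nat, [/\ (2 <= l)%N, (l <= j)%N,
       (j%:Z <= Num.ceil ((l%:R : R) `^ eta))%R, T l i w & H l.-1 i w = x] >] ].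

Definition Xi {R : realType} {Omega : Type} (N : nat) (rho1 : R)
  (H : nat -> 'I_N -> Omega -> 'I_N) (j : nat) (i i' : 'I_N) : set Omega :=
  [set w | forall j'' : nat, (Num.floor (theta rho1 j) <= j''%:Z)%R ->
            (j'' + 2 <= j)%N -> H j'' i' w != i].

Definition com_set {R : realType} {Omega : Type} (n m : nat) (rho1 : R)
  (adj : rel 'I_(n + m)) (H : nat -> 'I_(n + m) -> Omega -> 'I_(n + m))
  (w : Omega) : set nat :=
  [set j | forall j', (j <= j')%N -> forall i i' : 'I_(n + m),
      hon_edge n m adj i i' -> ~ Xi (n + m) rho1 H j' i i' w].

(* the event {tau_com > j}, tau_com = inf com_set (inf of empty set = +oo) *)
Definition tau_com_gt {R : realType} {Omega : Type} (n m : nat) (rho1 : R)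
  (adj : rel 'I_(n + m)) (H : nat -> 'I_(n + m) -> Omega -> 'I_(n + m))
  (j : nat) : set Omega :=
  [set w | forall k, (k <= j)%N -> ~ com_set n m rho1 adj H w k].

From HB Require Import structures.
From mathcomp Require Import all_boot all_order all_algebra.
From mathcomp Require Import all_classical all_reals all_analysis.
From mathcomp Require Import ring lra zify.
Import Order.TTheory GRing.Theory Num.Theory.
Local Open Scope classical_set_scope.
Local Open Scope ring_scope.

(** If tau_com > j, then for some j' >= j some honest agent i' never sampled
    its honest neighbour i during the phases floor(theta_j') .. j' - 2.  Put
    K = ceil(floor(theta_j')^eta).  After phase K, i can only be on the
    blocklist of i' if i' sampled i at a phase >= floor(theta_j'), so during
    the last j' - 2 - K >= j'/3 phases of the window i is never blocked; in each
    of them, whatever the past, i' samples i with probability at least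
    1/dbar.  Hence the event has probability at most
    (1 - 1/dbar)^(j'/3) <= exp(-j'/(3 dbar)).  A union bound over the at most
    (n+m)^2 honest edges and the geometric sum over j' >= j, whose ratio obeys
    1/(1 - exp(-1/(3 dbar))) <= 3 dbar + 1 <= 3(n+m), give the bound. *)

Section SigmaAlgebraPreimage.
Variables (T : pointedType) (G : set (set T)).
Hypothesis G_sigma : sigma_algebra setT G.

(* Lets the closure lemmas for [measurableType]s act on [G]. *)
Let sigma_measurableE : G.-sigma.-measurable = G.
Proof. exact: sigma_algebra_id. Qed.

Lemma sigma_setI (A B : set T) : G A -> G B -> G (A `&` B).
Proof. by rewrite -sigma_measurableE; exact: measurableI. Qed.

Lemma sigma_preimage_finType (K : finType) (X : T -> K) :
  (forall k, G (X @^-1` [set k])) -> forall S, G (X @^-1` S).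
Proof.
move=> GX S; rewrite -sigma_measurableE.
have -> : X @^-1` S = \bigcup_(k in S) X @^-1` [set k].
  by apply/seteqP; split=> [w Sw|w [k Sk /= ->]//]; exists (X w).
apply: fin_bigcup_measurable; first exact: finite_finset.
by move=> k _; rewrite sigma_measurableE.
Qed.

Lemma sigma_preimage_pair (K1 K2 : finType) (X : T -> K1) (Y : T -> K2) :
  (forall k, G (X @^-1` [set k])) -> (forall k, G (Y @^-1` [set k])) ->
  forall S, G ((fun w => (X w, Y w)) @^-1` S).
Proof.
move=> GX GY; apply: sigma_preimage_finType => -[k1 k2].
have -> : (fun w => (X w, Y w)) @^-1` [set (k1, k2)] =
    X @^-1` [set k1] `&` Y @^-1` [set k2].
  by apply/seteqP; split=> [w [<- <-]|w [/= -> ->]].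
exact: sigma_setI.
Qed.

Lemma sigma_preimage_ffun (I K : finType) (Y : I -> T -> K) :
  (forall i k, G (Y i @^-1` [set k])) ->
  forall S, G ((fun w => [ffun i => Y i w]) @^-1` S).
Proof.
move=> GY; apply: sigma_preimage_finType => k; rewrite -sigma_measurableE.
have -> : (fun w => [ffun i => Y i w]) @^-1` [set k] =
    \bigcap_(i in setT) Y i @^-1` [set k i].
  apply/seteqP; split=> [w /= <- i _|w /= Yw]; first by rewrite ffunE.
  by apply/ffunP => i; rewrite ffunE; apply: Yw.
apply: fin_bigcap_measurable; first exact: finite_finset.
by move=> i _; rewrite sigma_measurableE.
Qed.

End SigmaAlgebraPreimage.
Arguments sigma_setI {T G}.

Lemma measure_setI_preimage_sum {d} {T : measurableType d} {R : realType}
    (mu : {measure set T -> \bar R}) {K : finType} (X : T -> K) (P : pred K)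
    (A : set T) :
  measurable A -> (forall k, measurable (X @^-1` [set k])) ->
  mu (A `&` X @^-1` [set k | P k]) = (\sum_(k | P k) mu (A `&` X @^-1` [set k]))%E.
Proof.
move=> mA mX.
have -> : A `&` X @^-1` [set k | P k] = \bigcup_(k in [set` P]) (A `&` X @^-1` [set k]).
  apply/seteqP; split=> [w [Aw Pw]|w [k Pk [Aw /= Xw]]]; first by exists (X w).
  by split=> //; rewrite /preimage /= Xw.
rewrite measure_fin_bigcup //; first last.
- by move=> k _; apply: measurableI.
- by move=> k k' _ _ [w [[_ /= <-] [_ /= <-]]].
symmetry; apply: bigfs; first exact: index_enum_uniq.
by move=> k _; rewrite mem_index_enum.
Qed.

Lemma measure_preimage_sum {d} {T : measurableType d} {R : realType}
    (mu : {measure set T -> \bar R}) {K : finType} (X : T -> K) (A : set T) :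
  measurable A -> (forall k, measurable (X @^-1` [set k])) ->
  mu A = (\sum_k mu (A `&` X @^-1` [set k]))%E.
Proof.
move=> mA mX; rewrite -(measure_setI_preimage_sum mu X predT) //.
by congr (mu _); apply/seteqP; split=> [w Aw|w []].
Qed.

Lemma measure_bigcup_geometric_le {d} {T : measurableType d} {R : realType}
    (mu : {measure set T -> \bar R}) (B : nat -> set T) (C q : R) :
  (forall k, measurable (B k)) -> 0 <= C -> 0 < q -> q < 1 ->
  (forall k, mu (B k) <= (C * q ^+ k)%:E)%E ->
  (mu (\bigcup_k B k) <= (C / (1 - q))%:E)%E.
Proof.
move=> mB C0 q0 q1 Bk.
apply: le_trans (le_mu_bigcup mu mB (bigcup_measurable (fun k _ => mB k))) _.
apply: le_trans (lee_nneseries _ (fun k _ => Bk k)) _.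
  by move=> k _ _; exact: measure_ge0.
apply: lime_le.
  by apply: is_cvg_nneseries => k _; rewrite lee_fin mulr_ge0 // exprn_ge0 // ltW.
apply: nearW => N; rewrite sumEFin lee_fin.
by apply: geometric_le_lim; rewrite // gtr0_norm.
Qed.

Lemma measure_bigcup_finType_le {d} {T : measurableType d} {R : realType}
    (mu : {measure set T -> \bar R}) {I : finType} (P : pred I) (X : I -> set T) :
  (forall i, measurable (X i)) ->
  (mu (\bigcup_(i in [set i | P i]) X i) <= \sum_(i | P i) mu (X i))%E.
Proof.
move=> mX; rewrite bigfs ?index_enum_uniq //; last first.
  by move=> i _; rewrite mem_index_enum.
apply: content_sub_fsum => //.
by apply: fin_bigcup_measurable => //; exact: finite_finset.
Qed.

Definition unif {R : realFieldType} {K : finType} (S : {set K}) (x : K) : R :=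
  (x \in S)%:R / #|S|%:R.

Section UniformSampling.
Variables (R : realFieldType) (K : finType).

Lemma unif_ge0 (S : {set K}) (x : K) : 0 <= unif S x :> R.
Proof. by rewrite divr_ge0. Qed.

Lemma sum_unif (S : {set K}) : (0 < #|S|)%N -> \sum_x unif S x = 1 :> R.
Proof.
move=> S0; rewrite -mulr_suml.
have -> : \sum_x ((x \in S)%:R : R) = #|S|%:R.
  rewrite -sum1_card natr_sum [RHS]big_mkcond.
  by apply: eq_bigr => x _; case: (x \in S).
by rewrite divff // pnatr_eq0 -lt0n.
Qed.

Lemma sum_unif_le1 (S : {set K}) (Q : pred K) : \sum_(x | Q x) unif S x <= 1 :> R.
Proof.
apply: le_trans (_ : \sum_x unif S x <= 1).
  by rewrite [leRHS](bigID Q) /= lerDl; apply: sumr_ge0 => x _; exact: unif_ge0.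
case: (posnP #|S|) => [S0|/sum_unif -> //].
by rewrite big1 // => x _; rewrite /unif S0 invr0 mulr0.
Qed.

Lemma sum_unif_neq (S : {set K}) (x0 : K) : x0 \in S ->
  \sum_(x | x != x0) unif S x = 1 - #|S|%:R^-1 :> R.
Proof.
move=> Sx0; have S0 : (0 < #|S|)%N by apply/card_gt0P; exists x0.
have := sum_unif S S0; rewrite (bigD1 x0) //= /unif Sx0 mul1r; lra.
Qed.

Lemma prod_sum_unif_miss (I : finType) (P : pred I) (s : I -> {set K})
    (i' : I) (x0 : K) (D : nat) :
  P i' -> x0 \in s i' -> (#|s i'| <= D)%N ->
  \prod_(h | P h) \sum_(x | (h != i') || (x != x0)) unif (s h) x <= 1 - D%:R^-1 :> R.
Proof.
move=> Pi' x0s sD.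
have s0 : (0 < #|s i'|)%N by apply/card_gt0P; exists x0.
rewrite (bigD1 i') //= eqxx /= sum_unif_neq //.
have ge0 : 0 <= 1 - (#|s i'|%:R : R)^-1 by rewrite subr_ge0 invf_le1 ?ler1n ?ltr0n.
apply: le_trans (_ : (1 - (#|s i'|%:R : R)^-1) * 1 <= _).
  apply: ler_wpM2l => //; apply: prodr_ile1 => h _.
  by rewrite sumr_ge0 ?sum_unif_le1 // => x _; exact: unif_ge0.
rewrite mulr1 lerD2l lerN2 lef_pV2 ?posrE ?ltr0n ?ler_nat //.
exact: leq_trans s0 sD.
Qed.

End UniformSampling.

Section RealBounds.
Variable R : realType.

Lemma expr_one_sub_inv_le (D : R) (t : nat) : 1 <= D ->
  (1 - D^-1) ^+ t <= expR (- (t%:R / D)).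
Proof.
move=> D1; have D0 : 0 < D by apply: lt_le_trans D1.
apply: le_trans (_ : expR (- D^-1) ^+ t <= _).
  apply: lerXn2r; rewrite ?nnegrE ?expR_ge0 ?expR_ge1Dx //.
  by rewrite subr_ge0 invf_le1.
by rewrite -expRM_natl mulrN mulrC.
Qed.

Lemma inv_one_sub_expR_le (y : R) : 0 < y -> (1 - expR (- y^-1))^-1 <= y + 1.
Proof.
move=> y0.
have q_le : expR (- y^-1) <= y / (y + 1).
  rewrite expRN -[y / _]invf_div lef_pV2 ?posrE ?expR_gt0 ?divr_gt0 ?addr_gt0 //.
  have -> : (y + 1) / y = 1 + y^-1 by field; rewrite lt0r_neq0.
  exact: expR_ge1Dx.
have q_lt1 : expR (- y^-1) < 1 by rewrite expR_lt1 oppr_lt0 invr_gt0.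
rewrite -[leRHS]invrK lef_pV2 ?posrE ?invr_gt0 ?subr_gt0 ?addr_gt0 //.
suff : 1 - y / (y + 1) = (y + 1)^-1 by lra.
by field; rewrite lt0r_neq0 // addr_gt0.
Qed.

End RealBounds.

Lemma J2cond_window (R : realType) (eta rho1 : R) (j : nat) :
  1 < eta -> J2cond eta rho1 j ->
  exists K : nat, [/\ (Num.floor (theta rho1 j) <= K%:Z)%R,
    forall l : nat, (l%:Z <= Num.floor (theta rho1 j))%R ->
      (Num.ceil ((l%:R : R) `^ eta) <= K%:Z)%R
    & j%:R / 3 <= (j - 2 - K)%N%:R :> R].
Proof.
rewrite /J2cond; set f := Num.floor _; set K := Num.ceil _ => eta1 [f1 [_ jK]].
have eta0 : 0 <= eta by rewrite ltW // (lt_trans ltr01).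
have f1R : (1 : R) <= f%:~R by rewrite ler1z.
have fK : (f <= K)%R.
  rewrite -(ler_int R); apply: le_trans (ceil_ge _).
  by rewrite -{1}(powRr1 (le_trans ler01 f1R)) ler_powR // ltW.
have K0 : (0 <= K)%R by rewrite (le_trans _ fK) // (le_trans _ f1).
set k := `|K|%N; have Kk : K = k%:Z by rewrite gez0_abs.
exists k; rewrite -Kk; split=> //.
  move=> l lf; apply: le_ceil; apply: ge0_ler_powR; rewrite ?nnegrE //.
    by rewrite (le_trans ler01 f1R).
  by rewrite -[l%:R]/((l%:Z)%:~R) ler_int.
rewrite Kk pmulrn in jK.
have kj : (k + 2 <= j)%N.
  rewrite -(ler_nat R) natrD; have : 0 <= j%:R / 3 :> R by rewrite divr_ge0.
  lra.
by rewrite natrB ?natrB //; lia.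
Qed.

Lemma tau_com_gt_bigcup (R : realType) (Omega : Type) (n m : nat) (rho1 : R)
    (adj : rel 'I_(n + m)) (H : nat -> 'I_(n + m) -> Omega -> 'I_(n + m))
    (j : nat) :
  tau_com_gt n m rho1 adj H j =
  \bigcup_k \bigcup_(p in [set p : 'I_(n + m) * 'I_(n + m) | hon_edge n m adj p.1 p.2])
     Xi (n + m) rho1 H (j + k) p.1 p.2.
Proof.
apply/seteqP; split=> w.
  move=> tw; apply: contrapT => nB; apply: (tw j (leqnn j)) => j' jj' i i' he Xw.
  by apply: nB; exists (j' - j)%N => //; exists (i, i'); rewrite // subnKC.
move=> [k _ [[i i'] /= he Xw]] k0 k0j com.
by apply: (com (j + k)%N _ i i' he Xw); rewrite (leq_trans k0j) // leq_addr.
Qed.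

Section HonestSampling.
Variables (R : realType) (d : measure_display) (Omega : measurableType d)
  (Pr : probability Omega R) (n m : nat) (adj : rel 'I_(n + m)) (eta rho1 : R)
  (F : nat -> set (set Omega)) (H : nat -> 'I_(n + m) -> Omega -> 'I_(n + m))
  (T : nat -> 'I_(n + m) -> set Omega).
Hypotheses (F_sigma : forall j, sigma_algebra setT (F j))
  (F_measurable : forall j, F j `<=` measurable)
  (F_nondecreasing : forall j, F j `<=` F j.+1)
  (F_H : forall j i x, F j.+1 (H j i @^-1` [set x]))
  (F_T : forall j i, F j (T j i)).

Local Notation N := (n + m)%N.
Local Notation blocked := (blocklist N eta H T).

Lemma F_le p q : (p <= q)%N -> F p `<=` F q.
Proof.
move=> /subnK <-; elim: (q - p)%N => [|k IH] //= A FA.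
by rewrite addSn; apply/F_nondecreasing/IH.
Qed.

Lemma F_setI b A B : F b A -> F b B -> F b (A `&` B).
Proof. exact: sigma_setI. Qed.

Definition same_history b (w w' : Omega) :=
  (forall l i, (l < b)%N -> H l i w = H l i w') /\
  (forall l i, (l <= b)%N -> T l i w = T l i w').

Lemma same_history_le a b w w' :
  (a <= b)%N -> same_history b w w' -> same_history a w w'.
Proof.
move=> ab [eqH eqT]; split=> l i la; [apply: eqH | apply: eqT];
  exact: leq_trans la ab.
Qed.

Lemma F_same_history b (A : set Omega) :
  (forall w w', same_history b w w' -> A w -> A w') -> F b A.
Proof.
move=> Ahist.
pose hist w := ([ffun p : 'I_b * 'I_N => H p.1 p.2 w],
                [ffun p : 'I_b.+1 * 'I_N => `[< T p.1 p.2 w >]]).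
(* [A] is the preimage of its own image under the finite-valued history map. *)
have -> : A = hist @^-1` (hist @` A).
  apply/seteqP; split=> [w Aw|w' [w Aw [eH eT]]]; first by exists w.
  apply: Ahist Aw; split=> l i lb.
    by have /ffunP/(_ (Ordinal lb, i)) := eH; rewrite !ffunE.
  have /ffunP/(_ (Ordinal (lb : (l < b.+1)%N), i)) := eT; rewrite !ffunE /=.
  by move=> e; apply/propext/(asbool_eq_equiv e).
apply: (@sigma_preimage_pair Omega _ (F_sigma b)) => k;
  apply: (@sigma_preimage_ffun Omega _ (F_sigma b)) => -[l i] {}k /=.
  by apply: (F_le l.+1) => //; exact: F_H.
have F_Tl : F b (T l i) by apply: (F_le l); [rewrite -ltnS | exact: F_T].
case: k.
  by rewrite (_ : _ @^-1` _ = T l i) //; apply/seteqP; split=> w /= /asboolP.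
rewrite (_ : _ @^-1` _ = ~` T l i); last first.
  apply/seteqP; split=> w; rewrite /preimage /=.
    by move/negbT/asboolPn.
  by move/asboolF.
by rewrite -setTD; case: (F_sigma b) => _ + _; apply.
Qed.

Lemma blocked_same_history b i w w' :
  same_history b w w' -> blocked b i w = blocked b i w'.
Proof.
move=> [eqH eqT]; apply/setP => x; rewrite /blocklist !inE; apply: asbool_equiv_eq.
have eqH' l : (2 <= l)%N -> (l <= b)%N -> H l.-1 i w = H l.-1 i w'.
  by move=> l2 lb; apply: eqH; rewrite (leq_trans _ lb) // prednK // ltnW.
split=> -[l [l2 lb lc Tl Hl]]; exists l; split=> //.
- by rewrite -eqT.
- by rewrite -eqH'.
- by rewrite eqT.
- by rewrite eqH'.
Qed.

Definition sampling_set b h w : {set 'I_N} := nbhd N adj h :\: blocked b h w.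

Lemma F_notin_blocked b i i' : F b [set w | i \notin blocked b i' w].
Proof. by apply: F_same_history => w w' /(blocked_same_history _ i') /= ->. Qed.

Definition missed i i' a t : set Omega :=
  [set w | forall l, (a <= l < a + t)%N -> H l i' w != i /\ i \notin blocked l i' w].

Lemma F_missed i i' a t : F (a + t) (missed i i' a t).
Proof.
apply: F_same_history => w w' hw Mw l /andP [al lat].
have hwl : same_history l w w' by apply: same_history_le hw; exact: ltnW.
rewrite -(blocked_same_history _ _ _ _ hwl) -hw.1 //; apply: Mw.
by rewrite al.
Qed.

Lemma F_Xi j i i' : F j (Xi N rho1 H j i i').
Proof.
apply: F_same_history => w w' [eqH _] Xw l fl lj.
by rewrite -eqH ?(Xw l) //; rewrite -addn1 (leq_trans _ lj) // leq_add2l.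
Qed.

Local Notation D := (dbar n m adj).

Lemma card_nbhd_le_dbar i : honest n m i -> (#|nbhd N adj i| <= D)%N.
Proof. by move=> hi; rewrite /dbar (bigD1 i) //= leq_maxl. Qed.

Lemma dbar_gt0 i i' : honest n m i' -> adj i' i -> (0 < D)%N.
Proof.
move=> hi' ai; apply: leq_trans (card_nbhd_le_dbar _ hi').
by apply/card_gt0P; exists i; rewrite inE.
Qed.

Hypothesis H_uniform : forall j, (1 <= j)%N ->
  forall (A : set Omega) (s k : 'I_N -> _), F j A ->
  (forall w i, A w -> honest n m i -> nbhd N adj i :\: blocked j i w = s i) ->
  (Pr (A `&` [set w | forall i, honest n m i -> H j i w = k i])
   = Pr A * (\prod_(i : 'I_N | honest n m i)
                ((k i \in s i)%:R / #|s i|%:R))%:E)%E.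

Lemma miss_prob_cell b i i' (A : set Omega) (s : 'I_N -> {set 'I_N}) :
  (1 <= b)%N -> honest n m i' -> i \in s i' -> (#|s i'| <= D)%N -> F b A ->
  (forall w h, A w -> honest n m h -> sampling_set b h w = s h) ->
  (Pr (A `&` [set w | H b i' w != i]) <= (1 - D%:R^-1)%:E * Pr A)%E.
Proof.
move=> b1 hi' si' sD FA As.
(* Split along the joint sample of the honest agents (other entries pinned to
   [i]): the sampling rule evaluates each atom, and the sum over [pfamily]
   factors into a product of one sum per agent. *)
pose Q h x := (h != i') || (x != i).
pose X w := [ffun h => if honest n m h then H b h w else i].
have mX S : measurable (X @^-1` S).
  apply: (F_measurable b.+1); apply: F_same_history => w w' [eqH _] /=.
  by have -> : X w = X w' by apply/ffunP => h; rewrite !ffunE eqH.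
have -> : [set w | H b i' w != i] = X @^-1` [set k | k \in pfamily i (honest n m) Q].
  apply/seteqP; split=> w /=.
    move=> Hw; apply/pfamilyP; split=> [|h hh].
      by apply/fintype.subsetP => h; rewrite inE ffunE; case: ifP => //; rewrite eqxx.
    rewrite -topredE /= ffunE (_ : honest n m h) // /Q; case: eqP => [->|] //=.
  by move=> /pfamilyP [_ /(_ i' hi')]; rewrite /Q ffunE hi' eqxx.
rewrite measure_setI_preimage_sum //; last exact: F_measurable FA.
have cellE k : k \in pfamily i (honest n m) Q ->
    A `&` X @^-1` [set k] = A `&` [set w | forall h, honest n m h -> H b h w = k h].
  move=> /pfamilyP [supp _]; apply/seteqP; split=> w [Aw Xw]; split=> //=.
    by move=> h hh; rewrite -Xw ffunE hh.
  apply/ffunP => h; rewrite ffunE; case: ifP => [/Xw //|/negbT hh].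
  apply/esym/eqP; apply: contraR hh => ki.
  by apply: (fintype.subsetP supp); rewrite inE.
rewrite (eq_bigr _ (fun k Pk => congr1 Pr (cellE k Pk))).
rewrite (eq_bigr _ (fun (k : {ffun 'I_N -> 'I_N}) _ => H_uniform b b1 A s k FA As)).
rewrite -ge0_sume_distrr; last first.
  by move=> k _; rewrite lee_fin; apply: prodr_ge0 => h _; exact: unif_ge0.
rewrite sumEFin muleC; apply: lee_wpmul2r; first exact: measure_ge0.
rewrite lee_fin -(big_distr_big_dep _ _ _ (fun h x => unif (s h) x)).
exact: prod_sum_unif_miss.
Qed.

Lemma miss_prob_step b i i' (A : set Omega) :
  (1 <= b)%N -> honest n m i' -> adj i' i -> F b A ->
  (forall w, A w -> i \notin blocked b i' w) ->
  (Pr (A `&` [set w | H b i' w != i]) <= (1 - D%:R^-1)%:E * Pr A)%E.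
Proof.
move=> b1 hi' ai FA Ai.
(* On each cell of the partition by the profile of sampling sets, these sets
   are constant and [miss_prob_cell] applies. *)
pose Y w := [ffun h => if honest n m h then sampling_set b h w else finset.set0].
have FY S : F b (Y @^-1` S).
  apply: F_same_history => w w' hw /=; suff -> : Y w = Y w' by [].
  by apply/ffunP => h; rewrite !ffunE /sampling_set (blocked_same_history _ _ _ _ hw).
have mY s : measurable (Y @^-1` [set s]) by exact: F_measurable (FY _).
have mB : measurable [set w | H b i' w != i].
  rewrite (_ : [set w | _] = ~` (H b i' @^-1` [set i])); last first.
    by apply/seteqP; split=> w /= /eqP.
  by apply/measurableC/(F_measurable b.+1)/F_H.
have mA : measurable A by exact: F_measurable FA.
rewrite (measure_preimage_sum _ Y _ (measurableI _ _ mA mB) mY).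
rewrite [in leRHS](measure_preimage_sum _ Y _ mA mY) ge0_sume_distrr //.
apply: lee_sum => s _; rewrite setIAC.
set cell := A `&` Y @^-1` [set s].
have [[w0 [Aw0 Yw0]]|cell0] := pselect (exists w, cell w); last first.
  have -> : cell = set0 by apply/seteqP; split=> // w Cw; apply: cell0; exists w.
  by rewrite set0I measure0 mule0.
have sE w h : cell w -> honest n m h -> sampling_set b h w = s h.
  by move=> [_ /= <-] hh; rewrite ffunE hh.
have sE0 := sE w0 i' (conj Aw0 Yw0) hi'.
apply: (miss_prob_cell _ _ _ _ s) => //.
- by rewrite -sE0 /sampling_set finset.in_setD (Ai _ Aw0) /nbhd inE.
- rewrite -sE0; apply: leq_trans (subset_leq_card (subsetDl _ _)) _.
  exact: card_nbhd_le_dbar.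
- exact: F_setI.
Qed.

Lemma missed_prob_le i i' a t : (1 <= a)%N -> honest n m i' -> adj i' i ->
  (Pr (missed i i' a t) <= ((1 - D%:R^-1) ^+ t)%:E)%E.
Proof.
move=> a1 hi' ai; elim: t => [|t IH].
  rewrite (_ : missed _ _ _ _ = setT) ?probability_setT //.
  by apply/seteqP; split=> // w _ l; rewrite addn0 ltnNge andbN.
pose A := missed i i' a t `&` [set w | i \notin blocked (a + t) i' w].
have FA : F (a + t) A by apply: F_setI; [exact: F_missed | exact: F_notin_blocked].
have -> : missed i i' a t.+1 = A `&` [set w | H (a + t) i' w != i].
  apply/seteqP; split=> [w Mw|w [[Mw Bw] Hw] l].
    have /Mw [Hw Bw] : (a <= a + t < a + t.+1)%N by rewrite leq_addr addnS ltnSn.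
    by split=> //; split=> // l /andP [al lt]; apply: Mw; rewrite al addnS ltnS ltnW.
  rewrite addnS ltnS => /andP [al]; rewrite leq_eqVlt => /orP [/eqP -> //|lt].
  by apply: Mw; rewrite al.
have D0 : 0 <= 1 - (D%:R : R)^-1.
  by rewrite subr_ge0 invf_le1 // ?ler1n ?ltr0n (dbar_gt0 i i').
apply: le_trans (miss_prob_step _ _ _ _ _ hi' ai FA _) _.
- by rewrite (leq_trans a1) // leq_addr.
- by move=> w [].
rewrite exprS EFinM; apply: lee_wpmul2l; first by rewrite lee_fin.
apply: le_trans IH; apply: measureIl.
- exact: F_measurable (F_missed _ _ _ _).
- exact: F_measurable (F_notin_blocked _ _ _).
Qed.

Lemma Xi_sub_missed j i i' (K : nat) :
  (Num.floor (theta rho1 j) <= K%:Z)%R ->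
  (forall l : nat, (l%:Z <= Num.floor (theta rho1 j))%R ->
     (Num.ceil ((l%:R : R) `^ eta) <= K%:Z)%R) ->
  Xi N rho1 H j i i' `<=` missed i i' K.+1 (j - 2 - K).
Proof.
(* A block of [i] triggered at [l0 <= floor theta] expires by
   [ceil (l0 ^ eta) <= K < l]; one triggered later needs [H (l0 - 1) i' = i]
   inside the window of [Xi]. *)
set f := Num.floor _ => fK ceilK w Xw l /andP [Kl lj].
have fl : (f <= l%:Z)%R by apply: le_trans fK _; rewrite lez_nat ltnW.
split; first by apply: Xw => //; lia.
apply/negP; rewrite /blocklist inE asboolE => -[l0 [l02 l0l lc Tl Hl]].
have [fl0|l0f] := lerP f (l0.-1)%:Z.
  by move: (Xw _ fl0 ltac:(lia)); rewrite Hl eqxx.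
have : (l%:Z <= K%:Z)%R by apply: le_trans lc (ceilK _ _); lia.
by rewrite lez_nat; lia.
Qed.

Lemma Xi_prob_le j i i' : 1 < eta -> honest n m i' -> adj i' i ->
  J2cond eta rho1 j ->
  (Pr (Xi N rho1 H j i i') <= (expR (- (j%:R / (3 * D%:R))))%:E)%E.
Proof.
move=> eta1 hi' ai /(J2cond_window _ _ _ _ eta1) [K [fK ceilK jK]].
have D1 : 1 <= D%:R :> R by rewrite ler1n (dbar_gt0 i i').
apply: le_trans (le_measure _ _ _ (Xi_sub_missed j i i' K fK ceilK)) _.
- by rewrite inE; exact: F_measurable (F_Xi _ _ _).
- by rewrite inE; exact: F_measurable (F_missed _ _ _ _).
apply: le_trans (missed_prob_le i i' K.+1 (j - 2 - K) (ltn0Sn K) hi' ai) _.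
rewrite lee_fin; apply: le_trans (expr_one_sub_inv_le _ _ _ D1) _.
by rewrite ler_expR lerN2 invfM mulrA ler_wpM2r // invr_ge0 (le_trans ler01 D1).
Qed.

Lemma dbar_le_pred : irreflexive adj -> (D <= N.-1)%N.
Proof.
move=> irr; apply/bigmax_leqP => i _.
have <- : #|[set~ i]%SET| = N.-1 by rewrite cardsC1 card_ord.
apply/subset_leq_card/fintype.subsetP => k; rewrite !inE.
by apply: contraTneq => <-; rewrite irr.
Qed.

Let honest_edges := [set p : 'I_N * 'I_N | hon_edge n m adj p.1 p.2].

Lemma edges_Xi_prob_le j : symmetric adj -> 1 < eta -> J2cond eta rho1 j ->
  (Pr (\bigcup_(p in honest_edges) Xi N rho1 H j p.1 p.2)
   <= (N%:R ^+ 2 * expR (- (j%:R / (3 * D%:R))))%:E)%E.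
Proof.
move=> adj_sym eta1 Jj; apply: le_trans (measure_bigcup_finType_le _ _ _ _) _.
  by move=> p; exact: F_measurable (F_Xi _ _ _).
set E := expR _.
have -> : ((N%:R ^+ 2 * E)%:E = \sum_(p : 'I_N * 'I_N) E%:E)%E.
  rewrite sumEFin sumr_const card_prod card_ord; congr EFin.
  by rewrite -[E *+ _]mulr_natr natrM -expr2 mulrC.
rewrite [leRHS](bigID (fun p : 'I_N * 'I_N => hon_edge n m adj p.1 p.2)) /=.
apply: le_trans (leeDl _ _); last first.
  by rewrite sume_ge0 // => p _; rewrite lee_fin expR_ge0.
apply: lee_sum => -[i i'] /and3P /= [_ hi' ai].
by apply: Xi_prob_le; rewrite // adj_sym.
Qed.

Lemma tau_com_prob_le j J2 : simple_graph N adj -> 1 < eta ->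
  is_J2star eta rho1 J2 -> (J2 <= j)%N ->
  (Pr (tau_com_gt n m rho1 adj H j)
   <= (3 * N%:R ^+ 3 * expR (- (j%:R / (3 * D%:R))))%:E)%E.
Proof.
move=> [adj_sym adj_irr] eta1 [J2c _] J2j; rewrite tau_com_gt_bigcup.
have [D0|D_gt0] := posnP D.
  rewrite (_ : \bigcup_k _ = set0) ?measure0 ?lee_fin ?mulr_ge0 ?expR_ge0 //.
  apply/seteqP; split=> // w [k _ [[i i'] /and3P /= [_ hi' ai] _]].
  by have := dbar_gt0 i i' hi'; rewrite adj_sym D0 => /(_ ai).
set y : R := 3 * D%:R; set E := expR (- (j%:R / y)); set q := expR (- y^-1).
have y_gt0 : 0 < y by rewrite mulr_gt0 // ltr0n.
have Bk_le k : (Pr (\bigcup_(p in honest_edges) Xi N rho1 H (j + k) p.1 p.2)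
    <= (N%:R ^+ 2 * E * q ^+ k)%:E)%E.
  rewrite -mulrA -expRM_natl -expRD (_ : _ + _ = - ((j + k)%:R / y)).
    by apply: edges_Xi_prob_le => //; apply: J2c; exact: leq_trans J2j (leq_addr _ _).
  by rewrite natrD; field; rewrite lt0r_neq0.
have mB k : measurable (\bigcup_(p in honest_edges) Xi N rho1 H (j + k) p.1 p.2).
  by apply: fin_bigcup_measurable => // p _; exact: F_measurable (F_Xi _ _ _).
have C_ge0 : 0 <= N%:R ^+ 2 * E by rewrite mulr_ge0 ?exprn_ge0 ?expR_ge0.
have q_lt1 : q < 1 by rewrite expR_lt1 oppr_lt0 invr_gt0.
have := measure_bigcup_geometric_le Pr _ _ _ mB C_ge0 (expR_gt0 _) q_lt1 Bk_le.
move/le_trans; apply.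
have yN : y + 1 <= 3 * N%:R.
  have DN := dbar_le_pred adj_irr.
  have N_gt0 : (0 < N)%N by lia.
  have : D%:R <= N%:R - 1 :> R by rewrite -(natrB _ N_gt0) subn1 ler_nat.
  rewrite /y; lra.
have inv_le : (1 - q)^-1 <= 3 * N%:R := le_trans (inv_one_sub_expR_le _ _ y_gt0) yN.
rewrite lee_fin (_ : 3 * _ * E = N%:R ^+ 2 * E * (3 * N%:R)); last by ring.
exact: ler_wpM2l.
Qed.

End HonestSampling.

Theorem mainTheorem8
  (R : realType) (d : measure_display) (Omega : measurableType d)
  (Pr : probability Omega R)
  (n m : nat) (adj : rel 'I_(n + m))
  (alpha beta eta rho1 rho2 : R)
  (F : nat -> set (set Omega))
  (H : nat -> 'I_(n + m) -> Omega -> 'I_(n + m))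
  (T : nat -> 'I_(n + m) -> set Omega) :
  simple_graph (n + m) adj ->
  G_hon_connected n m adj ->
  1 < beta ->
  3 / 2 + 1 / (2 * beta) + 1 / (2 * rho1 ^+ 2) < alpha ->
  1 / (2 * alpha - 3) < rho2 -> rho2 < rho1 * (beta - 1) ->
  1 < eta -> 0 < rho1 -> rho1 <= 1 / eta ->
  (forall j, sigma_algebra setT (F j)) ->
  (forall j, F j `<=` measurable) ->
  (forall j, F j `<=` F j.+1) ->
  (forall j i x, F j.+1 (H j i @^-1` [set x])) ->
  (forall j i, F j (T j i)) ->
  (forall j, (1 <= j)%N ->
     forall (A : set Omega) (s k : 'I_(n + m) -> _),
     F j A ->
     (forall w i, A w -> honest n m i ->
        nbhd (n + m) adj i :\: blocklist (n + m) eta H T j i w = s i) ->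
     (Pr (A `&` [set w | forall i, honest n m i -> H j i w = k i])
      = Pr A * (\prod_(i : 'I_(n + m) | honest n m i)
                   ((k i \in s i)%:R / #|s i|%:R))%:E)%E) ->
  forall j J2 : nat, is_J2star eta rho1 J2 -> (J2 <= j)%N ->
  (Pr (tau_com_gt n m rho1 adj H j)
   <= (3 * (n + m)%:R ^+ 3 * expR (- (j%:R / (3 * (dbar n m adj)%:R))))%:E)%E.
Proof.
move=> simple _ _ _ _ _ eta_gt1 _ _ F_sigma F_meas F_incr F_H F_T H_unif j J2.
exact: tau_com_prob_le.
Qed.
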